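(* Let $F$ be a Banach lattice. The set of weakly dispersed closed subspaces of $F$ is open in the gap topology, and so is the set of strongly dispersed closed subspaces. Moreover, for a closed subspace $E$ of $F$ the following are equivalent: (i) $E$ is weakly (resp. strongly) dispersed; (ii) the un-topology (resp. una-topology) coincides with the norm topology on $E$; (iii) the semi-norm $\rho_E$ and the un-topology (resp. una-topology) are complementary on $F$, i.e. there is no net in $\mathrm{S}_F$ which is null both in the un-topology (resp. una-topology) and with respect to $\rho_E$.
   Context: $\mathrm{S}_X$ denotes the unit sphere of a normed space $X$. $\rho_E(f)$ is the distance from $f$ to $E$. The un-topology on $F$ is the linear topology with a base of zero neighborhoods $\{f\in F:\||f|\wedge h\|<\varepsilon\}$, $h\in F_+$, $\varepsilon>0$. $F^a$ is the (closed) ideal of order continuous elements of $F$, and the una-topology is defined like the un-topology but with $h\in F^a_+$ only. A subspace $E$ is weakly (resp. strongly) dispersed if some un- (resp. una-) neighborhood of $0_F$ is disjoint from $\mathrm{S}_E$. The gap topology on closed subspaces of $F$ is given by the metric $d_2(G,H)$ equal to the Hausdorff distance between $\mathrm{S}_G$ and $\mathrm{S}_H$. *)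

From HB Require Import structures.
From mathcomp Require Import all_boot all_order all_algebra.
From mathcomp Require Import all_classical all_reals all_analysis.
Set Implicit Arguments. Unset Strict Implicit. Unset Printing Implicit Defensive.
Import Order.TTheory GRing.Theory Num.Theory.
Import numFieldNormedType.Exports.
Local Open Scope classical_set_scope.
Local Open Scope ring_scope.

Section BanachLattice.
Variables (R : realType) (V : completeNormedModType R).
Record lattice_ops := LatticeOps {
  lle : V -> V -> Prop; ljoin : V -> V -> V; lmeet : V -> V -> V }.
Variable L : lattice_ops.
Local Notation le := (lle L).
Local Notation join := (ljoin L).
Local Notation meet := (lmeet L).

Definition is_banach_lattice : Prop :=
  (forall x, le x x) /\
  (forall x y, le x y -> le y x -> x = y) /\
  (forall x y z, le x y -> le y z -> le x z) /\
  (forall x y z, le x y -> le (x + z) (y + z)) /\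
  (forall (a : R) x, 0 <= a -> le 0 x -> le 0 (a *: x)) /\
  (forall x y, le x (join x y) /\ le y (join x y) /\
               forall z, le x z -> le y z -> le (join x y) z) /\
  (forall x y, le (meet x y) x /\ le (meet x y) y /\
               forall z, le z x -> le z y -> le z (meet x y)) /\
  (forall x y, le (join x (- x)) (join y (- y)) -> `|x| <= `|y|).

Definition labs (f : V) : V := join f (- f).

Definition directed (I : Type) (leI : I -> I -> Prop) : Prop :=
  [/\ (exists i : I, True), (forall i, leI i i),
      (forall i j k, leI i j -> leI j k -> leI i k) &
      (forall i j, exists k, leI i k /\ leI j k)].

Definition eventually (I : Type) (leI : I -> I -> Prop) (P : I -> Prop) : Prop :=
  exists i0, forall i, leI i0 i -> P i.

Definition order_continuous (f : V) : Prop :=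
  forall (I : Type) (leI : I -> I -> Prop) (x : I -> V),
    directed leI ->
    (forall i j, leI i j -> le (x j) (x i)) ->
    (forall i, le 0 (x i) /\ le (x i) (labs f)) ->
    (forall g, (forall i, le g (x i)) -> le g 0) ->
    forall eps : R, 0 < eps -> eventually leI (fun i => `|x i| < eps).

Definition Uzero (h : V) (eps : R) : set V := [set f | `|meet (labs f) h| < eps].

(* admissible "h" for the un-topology (h in F_+) and una-topology (h in F^a_+) *)
Definition un_h (h : V) : Prop := le 0 h.
Definition una_h (h : V) : Prop := le 0 h /\ order_continuous h.

Definition lin_open (adm : V -> Prop) (O : set V) : Prop :=
  forall f, O f -> exists h eps, [/\ adm h, 0 < eps &
    forall g, Uzero h eps (g - f) -> O g].

Definition un_open := lin_open un_h.
Definition una_open := lin_open una_h.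

Definition sphere (E : set V) : set V := [set f | E f /\ `|f| = 1].

Definition closed_subspace (E : set V) : Prop :=
  [/\ E 0, (forall x y, E x -> E y -> E (x + y)),
      (forall (a : R) x, E x -> E (a *: x)) & closed E].

Definition dispersed (adm : V -> Prop) (E : set V) : Prop :=
  exists h eps, [/\ adm h, 0 < eps & Uzero h eps `&` sphere E = set0].

Definition weakly_dispersed := dispersed un_h.
Definition strongly_dispersed := dispersed una_h.

(* distance from a point to a set (+oo for the empty set) *)
Definition dist (f : V) (A : set V) : \bar R :=
  ereal_inf [set (`|f - a|)%:E | a in A].

Definition hausdorff (A B : set V) : \bar R :=
  maxe (ereal_sup [set dist a B | a in A]) (ereal_sup [set dist b A | b in B]).

Definition gap (G H : set V) : \bar R := hausdorff (sphere G) (sphere H).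

Definition gap_open (P : set V -> Prop) : Prop :=
  forall G, closed_subspace G -> P G ->
    exists delta : R, 0 < delta /\
      forall H, closed_subspace H -> (gap G H < delta%:E)%E -> P H.

Definition coincide_on (topen : set V -> Prop) (E : set V) : Prop :=
  forall A, A `<=` E ->
    ((exists O, topen O /\ A = E `&` O) <-> (exists O, open O /\ A = E `&` O)).

Definition lin_null (adm : V -> Prop) (I : Type) (leI : I -> I -> Prop) (x : I -> V) :=
  forall h (eps : R), adm h -> 0 < eps -> eventually leI (fun i => Uzero h eps (x i)).

Definition rho_null (E : set V) (I : Type) (leI : I -> I -> Prop) (x : I -> V) :=
  forall eps : R, 0 < eps -> eventually leI (fun i => (dist (x i) E < eps%:E)%E).

Definition complementary (adm : V -> Prop) (E : set V) : Prop :=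
  forall (I : Type) (leI : I -> I -> Prop) (x : I -> V),
    directed leI -> (forall i, `|x i| = 1) ->
    lin_null adm leI x -> rho_null E leI x -> False.

End BanachLattice.

From Pilot Require Import Defs.
From HB Require Import structures.
From mathcomp Require Import all_boot all_order all_algebra.
From mathcomp Require Import all_classical all_reals all_analysis.
From mathcomp Require Import ring lra.
Import Order.TTheory GRing.Theory Num.Theory.
Import numFieldNormedType.Exports.
Local Open Scope classical_set_scope.
Local Open Scope ring_scope.

(* All statements are proved uniformly for a linear topology on F given by
   zero neighbourhoods U(h, eps) = {f : N_h(f) < eps}, where
   N_h(f) = || |f| /\ h || is the Riesz seminorm and h ranges over a class of
   "admissible" positive vectors: F_+ for the un-topology, F^a_+ for the
   una-topology.  The key fact is the dispersion estimate: if U(h, eps) misses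
   the unit sphere of a subspace E, then eps * min(||e||, 1) <= N_h(e) on E
   (proved from the homogeneity bound min(t,1) N_h(u) <= N_h(t u)).  From it:
   - gap-openness: a subspace within gap eps/2 of E has its sphere outside
     U(h, eps/2), by the triangle inequality and N_h <= ||.||;
   - (i) => (ii): N_h-balls in E are small in norm; (ii) => (i): the trace of
     the unit ball on E is relatively open, so some U(h, eps) meets S_E nowhere;
   - (i) => (iii): a unit vector N_h-small and close to E contradicts the
     estimate; (iii) => (i): choosing points of S_E inside every U(h, eps)
     gives a net null for both, provided the admissible class contains 0 and is
     closed under addition. *)

Set Implicit Arguments. Unset Strict Implicit.

Lemma open_norm_ball (R : realType) (V : normedModType R) (O : set V) f :
  open O -> O f -> exists2 r : R, 0 < r & forall g, `|f - g| < r -> O g.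
Proof.
rewrite openE => HO /HO /nbhs_ballP [r r0 Hr].
by exists r => // g fg; apply: Hr; rewrite -ball_normE.
Qed.

Lemma eventually_and (I : Type) (leI : I -> I -> Prop) (P Q : I -> Prop) :
  Defs.directed leI -> Defs.eventually leI P -> Defs.eventually leI Q ->
  Defs.eventually leI (fun i => P i /\ Q i).
Proof.
move=> [_ _ leI_trans up] [i1 H1] [i2 H2]; have [k [k1 k2]] := up i1 i2.
by exists k => i ki; split; [apply: H1 | apply: H2]; exact: leI_trans ki.
Qed.

Section VectorLattice.
Variables (R : realType) (V : completeNormedModType R) (L : lattice_ops V).
Hypothesis HF : is_banach_lattice L.
Local Notation le := (lle L).
Local Notation join := (ljoin L).
Local Notation meet := (lmeet L).
Local Notation labs := (labs L).

Lemma lle_refl x : le x x.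
Proof. by case: HF. Qed.
Lemma lle_antisym x y : le x y -> le y x -> x = y.
Proof. by case: HF => _ [H _]; apply: H. Qed.
Lemma lle_trans x y z : le x y -> le y z -> le x z.
Proof. by case: HF => _ [_ [H _]]; apply: H. Qed.
Lemma lle_addr x y z : le x y -> le (x + z) (y + z).
Proof. by case: HF => _ [_ [_ [H _]]]; apply: H. Qed.
Lemma lle0_scale (a : R) x : 0 <= a -> le 0 x -> le 0 (a *: x).
Proof. by case: HF => _ [_ [_ [_ [H _]]]]; apply: H. Qed.
Lemma join_ubl x y : le x (join x y).
Proof. by case: HF => _ [_ [_ [_ [_ [H _]]]]]; case: (H x y). Qed.
Lemma join_ubr x y : le y (join x y).
Proof. by case: HF => _ [_ [_ [_ [_ [H _]]]]]; case: (H x y) => _ []. Qed.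
Lemma join_lub x y z : le x z -> le y z -> le (join x y) z.
Proof. by case: HF => _ [_ [_ [_ [_ [H _]]]]]; case: (H x y) => _ [] _; apply. Qed.
Lemma meet_lbl x y : le (meet x y) x.
Proof. by case: HF => _ [_ [_ [_ [_ [_ [H _]]]]]]; case: (H x y). Qed.
Lemma meet_lbr x y : le (meet x y) y.
Proof. by case: HF => _ [_ [_ [_ [_ [_ [H _]]]]]]; case: (H x y) => _ []. Qed.
Lemma meet_glb x y z : le z x -> le z y -> le z (meet x y).
Proof. by case: HF => _ [_ [_ [_ [_ [_ [H _]]]]]]; case: (H x y) => _ [] _; apply. Qed.
Lemma lattice_norm x y : le (labs x) (labs y) -> `|x| <= `|y|.
Proof. by case: HF => _ [_ [_ [_ [_ [_ [_ H]]]]]]; apply: H. Qed.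

Lemma lle_addl x y z : le x y -> le (z + x) (z + y).
Proof. by move=> /(lle_addr z); rewrite ![_ + z]addrC. Qed.

Lemma lle_add x y u v : le x y -> le u v -> le (x + u) (y + v).
Proof. by move=> xy uv; apply: lle_trans (lle_addr u xy) (lle_addl y uv). Qed.

Lemma lle_subP x y : le x y <-> le 0 (y - x).
Proof.
split=> H; first by have := lle_addr (- x) H; rewrite subrr.
by have := lle_addr x H; rewrite add0r subrK.
Qed.

Lemma lle_opp x y : le x y -> le (- y) (- x).
Proof. by move/lle_subP => H; apply/lle_subP; rewrite opprK addrC. Qed.

Lemma lle_scale (a : R) x y : 0 <= a -> le x y -> le (a *: x) (a *: y).
Proof. by move=> a0 /lle_subP H; apply/lle_subP; rewrite -scalerBr; apply: lle0_scale. Qed.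

Lemma lle_scale_scalar (a b : R) x : a <= b -> le 0 x -> le (a *: x) (b *: x).
Proof.
by move=> ab x0; apply/lle_subP; rewrite -scalerBl; apply: lle0_scale; rewrite ?subr_ge0.
Qed.

Lemma lle_scaleV (c : R) x y : 0 < c -> le (c *: x) y -> le x (c^-1 *: y).
Proof.
move=> c0; have ci : 0 <= c^-1 by rewrite invr_ge0 ltW.
move=> /(lle_scale ci); by rewrite scalerA mulVf ?gt_eqF // scale1r.
Qed.

Lemma labs_ge0 x : le 0 (labs x).
Proof.
have := lle_add (join_ubl x (- x)) (join_ubr x (- x)); rewrite subrr => H.
have -> : labs x = 2^-1 *: (labs x + labs x).
  by rewrite scalerDr -scalerDl -[LHS]scale1r; congr (_ *: _); field.
by have := lle_scale (a := 2^-1) _ H; rewrite scaler0; apply; rewrite invr_ge0.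
Qed.

Lemma labs_id x : le 0 x -> labs x = x.
Proof.
move=> x0; apply: lle_antisym; last exact: join_ubl.
apply: join_lub; first exact: lle_refl.
by have := lle_opp x0; rewrite oppr0 => /lle_trans; apply.
Qed.

Lemma labs0 : labs 0 = 0.
Proof. exact/labs_id/lle_refl. Qed.

Lemma labs_triangle a b : le (labs (a + b)) (labs a + labs b).
Proof.
apply: join_lub; first exact: lle_add (join_ubl _ _) (join_ubl _ _).
by rewrite opprD; exact: lle_add (join_ubr _ _) (join_ubr _ _).
Qed.

Lemma join_scale (c : R) x y : 0 < c -> join (c *: x) (c *: y) = c *: join x y.
Proof.
move=> c0; apply: lle_antisym.
  by apply: join_lub; apply: lle_scale (ltW c0) _; [exact: join_ubl | exact: join_ubr].
have H : le (join x y) (c^-1 *: join (c *: x) (c *: y)).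
  by apply: join_lub; apply: lle_scaleV => //; [exact: join_ubl | exact: join_ubr].
by have := lle_scale (ltW c0) H; rewrite scalerA mulfV ?gt_eqF // scale1r.
Qed.

Lemma labs_scale (c : R) x : 0 < c -> labs (c *: x) = c *: labs x.
Proof. by move=> c0; rewrite /Defs.labs -join_scale // scalerN. Qed.

Lemma norm_mono x y : le 0 x -> le x y -> `|x| <= `|y|.
Proof. by move=> x0 xy; apply: lattice_norm; rewrite !labs_id //; exact: lle_trans xy. Qed.

Lemma norm_labs x : `|labs x| <= `|x|.
Proof. by apply: lattice_norm; rewrite (labs_id (labs_ge0 x)); apply: lle_refl. Qed.

Lemma meet_ge0 p h : le 0 p -> le 0 h -> le 0 (meet p h).
Proof. exact: meet_glb. Qed.

Lemma meet_mono p p' h h' : le p p' -> le h h' -> le (meet p h) (meet p' h').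
Proof.
move=> pp hh; apply: meet_glb.
  exact: lle_trans (meet_lbl _ _) pp.
exact: lle_trans (meet_lbr _ _) hh.
Qed.

Lemma meet_addl z x y : z + meet x y = meet (z + x) (z + y).
Proof.
apply: lle_antisym.
  by apply: meet_glb; apply: lle_addl; [exact: meet_lbl | exact: meet_lbr].
have H : le (meet (z + x) (z + y) - z) (meet x y).
  apply: meet_glb.
    by have := lle_addr (- z) (meet_lbl (z + x) (z + y)); rewrite [X in le _ X]addrC addKr.
  by have := lle_addr (- z) (meet_lbr (z + x) (z + y)); rewrite [X in le _ X]addrC addKr.
by have := lle_addl z H; rewrite addrC subrK.
Qed.

Lemma meet_subadd p q h : le 0 p -> le 0 q -> le 0 h ->
  le (meet (p + q) h) (meet p h + meet q h).
Proof.
move=> p0 q0 h0; set m := meet (p + q) h.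
suff H : le (m - meet q h) (meet p h) by have := lle_addr (meet q h) H; rewrite subrK.
apply: meet_glb.
- suff H : le m (p + meet q h) by have := lle_addr (- meet q h) H; rewrite addrK.
  rewrite meet_addl; apply: meet_glb; first exact: meet_lbl.
  by apply: lle_trans (meet_lbr _ _) _; have := lle_addr h p0; rewrite add0r.
- apply: (lle_trans (y := m)); last exact: meet_lbr.
  by have := lle_addl m (lle_opp (meet_ge0 q0 h0)); rewrite oppr0 addr0.
Qed.

Lemma meet_scale_lb (s : R) u h : 0 <= s -> s <= 1 -> le 0 h ->
  le (s *: meet u h) (meet (s *: u) h).
Proof.
move=> s0 s1 h0; apply: meet_glb; first exact: lle_scale s0 (meet_lbl _ _).
apply: lle_trans (lle_scale s0 (meet_lbr _ _)) _.
by rewrite -{2}[h]scale1r; apply: lle_scale_scalar.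
Qed.
Definition N h f := `|meet (labs f) h|.

Lemma N_triangle h a b : le 0 h -> N h (a + b) <= N h a + N h b.
Proof.
move=> h0; apply: le_trans (ler_normD _ _).
apply: norm_mono; first exact: meet_ge0 (labs_ge0 _) h0.
apply: lle_trans (meet_subadd (labs_ge0 a) (labs_ge0 b) h0).
exact: meet_mono (labs_triangle a b) (lle_refl h).
Qed.

Lemma N_le_norm h f : le 0 h -> N h f <= `|f|.
Proof.
move=> h0; apply: le_trans (norm_labs f).
by apply: norm_mono; [exact: meet_ge0 (labs_ge0 _) h0 | exact: meet_lbl].
Qed.

Lemma N0 h : le 0 h -> N h 0 = 0.
Proof.
move=> h0; apply/eqP; rewrite eq_le normr_ge0 andbT.
by apply: le_trans (N_le_norm 0 h0) _; rewrite normr0.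
Qed.

Lemma N_mono h h' f : le 0 h -> le h h' -> N h f <= N h' f.
Proof.
move=> h0 hh; apply: norm_mono; first exact: meet_ge0 (labs_ge0 _) h0.
exact: meet_mono (lle_refl _) hh.
Qed.

(* Quantitative homogeneity: rescaling u by t >= 0 shrinks N_h(u) by at most
   the factor min(t, 1).  This is what lets a bound on the unit sphere of a
   subspace propagate to the whole subspace. *)
Lemma N_scale_lb h u (t : R) : le 0 h -> 0 <= t ->
  Num.min t 1 * N h u <= N h (t *: u).
Proof.
move=> h0; rewrite le_eqVlt => /orP[/eqP <- | t0].
  by rewrite min_l ?ler01 // mul0r normr_ge0.
have m0 : 0 <= Num.min t 1 by rewrite le_min (ltW t0) ler01.
have m1 : Num.min t 1 <= 1 by rewrite ge_min lexx orbT.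
rewrite /N -[Num.min t 1]ger0_norm // -normrZ.
apply: norm_mono; first exact: lle0_scale m0 (meet_ge0 (labs_ge0 _) h0).
apply: lle_trans (meet_scale_lb (labs u) m0 m1 h0) _.
rewrite labs_scale //; apply: meet_mono (lle_refl _).
by apply: lle_scale_scalar (labs_ge0 _); rewrite ge_min lexx.
Qed.

Section Dispersion.
(* [adm] is the class of admissible h's defining a linear topology through the
   zero neighbourhoods [Uzero h eps]; for the un-topology it is F_+, for the
   una-topology it is F^a_+.  Here only positivity of admissible h's is used. *)
Variable adm : V -> Prop.
Hypothesis adm_ge0 : forall h, adm h -> le 0 h.

(* The linear topology is coarser than the norm topology, since N_h <= ||.||. *)
Lemma lin_open_open (O : set V) : lin_open L adm O -> open O.
Proof.
move=> HO; rewrite openE => f Of; apply/nbhs_ballP.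
have [h [eps [ah e0 Hh]]] := HO f Of.
exists eps => // g; rewrite -ball_normE /= => fg; apply: Hh.
by apply: le_lt_trans (N_le_norm _ (adm_ge0 ah)) _; rewrite distrC.
Qed.

Lemma lin_open_Nballs h (P : set (V * R)) : adm h ->
  lin_open L adm [set g | exists2 p, P p & N h (g - p.1) < p.2].
Proof.
move=> ah g [[f c] Pfc /= gf]; exists h, (c - N h (g - f)); split => //.
  by rewrite subr_gt0.
move=> g' Ug'; exists (f, c) => //=.
have := N_triangle (g' - g) (g - f) (adm_ge0 ah); rewrite addrA subrK => H.
by apply: le_lt_trans H _; rewrite -ltrBrDr.
Qed.

Lemma sphere_N_lb h eps (E : set V) : Uzero L h eps `&` sphere E = set0 ->
  forall u, E u -> `|u| = 1 -> eps <= N h u.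
Proof.
move=> HD u Eu nu; rewrite leNgt; apply/negP => Nu.
by have : (Uzero L h eps `&` sphere E) u by []; rewrite HD.
Qed.

Lemma dispersion_estimate h eps (E : set V) : closed_subspace E -> le 0 h ->
  Uzero L h eps `&` sphere E = set0 ->
  forall e, E e -> eps * Num.min `|e| 1 <= N h e.
Proof.
move=> [_ _ ES _] h0 HD e Ee; have [->|nz] := eqVneq e 0.
  by rewrite normr0 min_l ?ler01 // mulr0; exact: normr_ge0.
have ne0 : 0 < `|e| by rewrite normr_gt0.
set u := `|e|^-1 *: e.
have eu : e = `|e| *: u by rewrite /u scalerA mulfV ?gt_eqF // scale1r.
have Nu : eps <= N h u.
  apply: sphere_N_lb HD _ (ES _ _ Ee) _.
  by rewrite normrZ normfV normr_id mulVf ?gt_eqF.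
rewrite {2}eu; apply: le_trans (N_scale_lb u h0 (ltW ne0)); rewrite mulrC.
by apply: ler_wpM2l Nu; rewrite le_min (ltW ne0) ler01.
Qed.

(* Dispersion is stable under small perturbations in the gap metric: a
   subspace within gap eps/2 of G has its sphere outside U(h, eps/2). *)
Lemma gap_open_dispersed : gap_open (dispersed L adm).
Proof.
move=> G _ [h [eps [ah e0 HG]]]; have e20 : 0 < eps / 2 by rewrite divr_gt0.
exists (eps / 2); split => // H _ gapGH; exists h, (eps / 2); split => //.
apply/seteqP; split=> // y [Ny [Hy ny]]; have {}Ny : N h y < eps / 2 := Ny.
have : (dist y (sphere G) < (eps / 2)%:E)%E.
  apply: le_lt_trans gapGH; rewrite /gap /hausdorff le_max; apply/orP; right.
  by apply: ereal_sup_ubound; exists y.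
move=> /ereal_inf_lt [_ [a [Ga na] <-]]; rewrite lte_fin distrC => ay.
have Na := sphere_N_lb HG Ga na.
have := N_triangle y (a - y) (adm_ge0 ah); rewrite addrC subrK.
have := N_le_norm (a - y) (adm_ge0 ah).
lra.
Qed.

Lemma dispersed_Nball_sub h eps (E O : set V) f : closed_subspace E ->
  le 0 h -> 0 < eps -> Uzero L h eps `&` sphere E = set0 ->
  open O -> E f -> O f ->
  exists2 c, 0 < c & forall e, E e -> N h (e - f) < c -> O e.
Proof.
move=> cE h0 e0 HD HO Ef Of; have [r r0 Hr] := open_norm_ball HO Of.
exists (eps * Num.min r 1); first by rewrite mulr_gt0 // lt_min r0 ltr01.
move=> e Ee Nef; apply: Hr; rewrite distrC ltNge; apply/negP => rle.
have Eef : E (e - f).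
  by case: cE => _ EA ES _; apply: EA => //; rewrite -scaleN1r; apply: ES.
have := dispersion_estimate cE h0 HD Eef; rewrite leNgt => /negP; apply.
apply: lt_le_trans Nef _; rewrite ler_pM2l //.
by rewrite le_min !ge_min lexx rle orbT.
Qed.

Lemma dispersed_coincide (E : set V) : closed_subspace E ->
  dispersed L adm E -> coincide_on (lin_open L adm) E.
Proof.
move=> cE [h [eps [ah e0 HD]]] A AE; split.
  by move=> [Q [HQ ->]]; exists Q; split => //; exact: lin_open_open.
move=> [W [HW ->]].
pose P := [set p : V * R | [/\ E p.1, 0 < p.2 &
  forall e, E e -> N h (e - p.1) < p.2 -> W e]].
exists [set g | exists2 p, P p & N h (g - p.1) < p.2].
split; first exact: lin_open_Nballs.
apply/seteqP; split=> g [Eg Og]; split => //.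
  have [c c0 Hc] := dispersed_Nball_sub cE (adm_ge0 ah) e0 HD HW Eg Og.
  by exists (g, c) => /=; [split | rewrite subrr (N0 (adm_ge0 ah))].
by case: Og => -[f c] [_ _ Hfc] /= Ngf; apply: Hfc.
Qed.

(* (ii) => (i): if the topologies agree on E, the trace on E of the open unit
   ball is relatively open for the linear topology, so some U(h, eps) meets E
   only inside the open unit ball, hence misses the unit sphere. *)
Lemma coincide_dispersed (E : set V) : closed_subspace E ->
  coincide_on (lin_open L adm) E -> dispersed L adm E.
Proof.
move=> [E0 _ _ _] HC.
have ball_trace : E `&` ball (0 : V) 1 = [set g | E g /\ `|g| < 1].
  by apply/seteqP; split => g [Eg ng]; split => //; move: ng;
    rewrite -ball_normE /= sub0r normrN.
have [_ /(_ _) []] := HC _ (fun g (Hg : E g /\ `|g| < 1) => proj1 Hg).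
  by exists (ball (0 : V) 1); split; [exact: ball_open | rewrite ball_trace].
move=> Q [HQ HA].
have [_ /HQ [h [eps [ah e0 Hh]]]] : (E `&` Q) 0.
  by rewrite -HA; split; rewrite // normr0 ltr01.
exists h, eps; split => //; apply/seteqP; split => // g [Ug [Eg ng]].
have : (E `&` Q) g by split => //; apply: Hh; rewrite subr0.
by rewrite -HA => -[_]; rewrite ng ltxx.
Qed.

(* (i) => (iii): if U(h, eps) misses the unit sphere of E, a unit vector that is
   N_h-small cannot be close to E, by the dispersion estimate. *)
Lemma dispersed_complementary (E : set V) : closed_subspace E ->
  dispersed L adm E -> complementary L adm E.
Proof.
move=> cE [h [eps [ah e0 HD]]] I leI x dirI nx Nnull rho_null.
have h0 := adm_ge0 ah; pose eta := Num.min (eps / 4) (1 / 4).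
have eta0 : 0 < eta by rewrite lt_min !divr_gt0.
have eta_eps : eta <= eps / 4 by rewrite ge_min lexx.
have eta1 : eta <= 1 / 4 by rewrite ge_min lexx orbT.
have [k [Nk dk]] : exists k, N h (x k) < eps / 2 /\ (dist (x k) E < eta%:E)%E.
  have [k Hk] := eventually_and dirI (Nnull h (eps / 2) ah (divr_gt0 e0 (ltr0Sn _ 1)))
    (rho_null eta eta0).
  by exists k; apply: Hk; case: dirI.
move: dk => /ereal_inf_lt [_ [a Ea <-]]; rewrite lte_fin => xa.
have := lerB_dist (x k) a; rewrite nx => a_large.
have a34 : 3 / 4 <= Num.min `|a| 1 by rewrite le_min; apply/andP; split; lra.
have := ler_wpM2l (ltW e0) a34.
have := dispersion_estimate cE h0 HD Ea.
have := N_triangle (x k) (a - x k) h0; rewrite addrC subrK.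
have := N_le_norm (a - x k) h0; rewrite distrC in xa.
lra.
Qed.

Section Converse.
(* For (iii) => (i) the admissible h's must be directed upwards; it suffices
   that they contain 0 and are closed under addition. *)
Hypothesis adm0 : adm 0.
Hypothesis adm_add : forall h1 h2, adm h1 -> adm h2 -> adm (h1 + h2).

(* The basic zero neighbourhoods U(h, eps), indexed by admissible pairs and
   ordered by reverse inclusion (h larger, eps smaller). *)
Definition adm_pair := {p : V * R | adm p.1 /\ 0 < p.2}.
Definition adm_pair_le (p q : adm_pair) : Prop :=
  le (sval p).1 (sval q).1 /\ (sval q).2 <= (sval p).2.

Lemma adm_pair_directed : Defs.directed adm_pair_le.
Proof.
split.
- by exists (exist _ (0, 1) (conj adm0 ltr01)).
- by move=> p; split; [exact: lle_refl | exact: lexx].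
- move=> p q r [pq1 pq2] [qr1 qr2].
  by split; [exact: lle_trans pq1 qr1 | exact: le_trans qr2 pq2].
- move=> [[h1 e1] [a1 p1]] [[h2 e2] [a2 p2]].
  have a12 : adm (h1 + h2) /\ 0 < Num.min e1 e2.
    by rewrite lt_min p1 p2; split; first exact: adm_add.
  exists (exist _ (h1 + h2, Num.min e1 e2) a12); rewrite /adm_pair_le /=.
  split; split; rewrite ?ge_min ?lexx ?orbT //.
    by have := lle_addl h1 (adm_ge0 a2); rewrite addr0.
  by have := lle_addr h2 (adm_ge0 a1); rewrite add0r.
Qed.

(* (iii) => (i): if no U(h, eps) misses the unit sphere of E, picking a point of
   S_E in each U(h, eps) gives a net in S_F which is null for the linear
   topology and lies in E, so is rho_E-null. *)
Lemma complementary_dispersed (E : set V) :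
  complementary L adm E -> dispersed L adm E.
Proof.
move=> HC; apply: contrapT => nd.
have pick (p : adm_pair) : exists g, N (sval p).1 g < (sval p).2 /\ sphere E g.
  case: p => -[h e] [ah e0] /=; apply: contrapT => ng; apply: nd.
  exists h, e; split => //; apply/seteqP; split => // g [Ug Sg].
  by apply: ng; exists g.
have [x Hx] := choice pick.
apply: (HC _ _ x adm_pair_directed); first by move=> p; case: (Hx p) => _ [].
- move=> h e ah e0; exists (exist _ (h, e) (conj ah e0)) => p [hp ep].
  case: (Hx p) => Np _; apply: le_lt_trans (N_mono _ (adm_ge0 ah) hp) _.
  exact: lt_le_trans Np ep.
- move=> e e0; exists (exist _ (0, 1) (conj adm0 ltr01)) => p _.
  apply: (@le_lt_trans _ _ (`|x p - x p|)%:E).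
    by apply: ereal_inf_lbound; exists (x p) => //; case: (Hx p) => _ [].
  by rewrite subrr normr0 lte_fin.
Qed.

End Converse.

End Dispersion.

(* The decomposition x = (x /\ h1) + (x - x /\ h1) used to split a net below
   h1 + h2 into a part below h1 and a part below h2. *)
Lemma sub_meet_ge0 x h : le 0 (x - meet x h).
Proof. by have /lle_subP := meet_lbl x h. Qed.

Lemma sub_meet_mono a b h : le a b -> le (a - meet a h) (b - meet b h).
Proof.
move=> ab; have H : le (a + meet b h) (b + meet a h).
  by rewrite !meet_addl; apply: meet_mono; [rewrite addrC; exact: lle_refl | exact: lle_addr].
have := lle_addr (- (meet a h + meet b h)) H.
by rewrite opprD !addrA (addrAC a) addrK addrK.
Qed.

Lemma sub_meet_le x h1 h2 : le 0 h2 -> le x (h1 + h2) -> le (x - meet x h1) h2.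
Proof.
move=> h20 xh; suff H : le x (h2 + meet x h1) by have := lle_addr (- meet x h1) H; rewrite addrK.
rewrite meet_addl; apply: meet_glb; last by rewrite addrC.
by have := lle_addr x h20; rewrite add0r.
Qed.

(* F^a_+ contains 0 and is closed under addition, so the una-topology is a
   directed system of seminorms as required in [Converse]. *)
Lemma order_continuous0 : order_continuous L 0.
Proof.
move=> I leI x [[i0 _] _ _ _] _ bnd _ eps e0; exists i0 => i _.
have -> : x i = 0 by case: (bnd i); rewrite labs0 => x0 x_le0; exact: lle_antisym.
by rewrite normr0.
Qed.

Lemma order_continuous_add h1 h2 : le 0 h1 -> le 0 h2 ->
  order_continuous L h1 -> order_continuous L h2 -> order_continuous L (h1 + h2).
Proof.
move=> h10 h20 oc1 oc2 I leI x dirI decr bnd inf eps e0.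
have h0 : le 0 (h1 + h2) by have := lle_add h10 h20; rewrite addr0.
have {}bnd i : le 0 (x i) /\ le (x i) (h1 + h2) by rewrite -(labs_id h0).
have e20 : 0 < eps / 2 by rewrite divr_gt0.
pose y i := meet (x i) h1; pose z i := x i - y i.
have ev_y : Defs.eventually leI (fun i => `|y i| < eps / 2).
  apply: oc1 => //.
  - by move=> i j ij; apply: meet_mono (decr _ _ ij) (lle_refl _).
  - move=> i; rewrite labs_id //; split; last exact: meet_lbr.
    by apply: meet_ge0 h10; case: (bnd i).
  - by move=> g Hg; apply: inf => i; apply: lle_trans (Hg i) (meet_lbl _ _).
have ev_z : Defs.eventually leI (fun i => `|z i| < eps / 2).
  apply: oc2 => //.
  - by move=> i j ij; apply: sub_meet_mono; apply: decr.
  - move=> i; rewrite labs_id //; split; first exact: sub_meet_ge0.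
    by apply: sub_meet_le h20 _; case: (bnd i).
  - move=> g Hg; apply: inf => i; apply: lle_trans (Hg i) _.
    have := lle_addl (x i) (lle_opp (meet_ge0 (proj1 (bnd i)) h10)).
    by rewrite oppr0 addr0.
have [k Hk] := eventually_and dirI ev_y ev_z; exists k => i /Hk [yi zi].
have -> : x i = y i + z i by rewrite /z addrC subrK.
by apply: le_lt_trans (ler_normD _ _) _; rewrite (splitr eps) ltrD.
Qed.

End VectorLattice.

Unset Implicit Arguments. Set Strict Implicit.

Theorem proposition4p1 (R : realType) (V : completeNormedModType R)
  (F : lattice_ops V) (HF : is_banach_lattice F) :
  gap_open (weakly_dispersed F) /\
  gap_open (strongly_dispersed F) /\
  (forall E : set V, closed_subspace E ->
     (weakly_dispersed F E <-> coincide_on (un_open F) E) /\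
     (weakly_dispersed F E <-> complementary F (un_h F) E)) /\
  (forall E : set V, closed_subspace E ->
     (strongly_dispersed F E <-> coincide_on (una_open F) E) /\
     (strongly_dispersed F E <-> complementary F (una_h F) E)).
Proof.
have un_ge0 h : un_h F h -> lle F 0 h by [].
have una_ge0 h : una_h F h -> lle F 0 h by case.
have un0 : un_h F 0 by exact: lle_refl.
have una0 : una_h F 0 by split; [exact: lle_refl | exact: order_continuous0].
have un_add h1 h2 : un_h F h1 -> un_h F h2 -> un_h F (h1 + h2).
  by move=> p1 p2; have := lle_add HF p1 p2; rewrite addr0.
have una_add h1 h2 : una_h F h1 -> una_h F h2 -> una_h F (h1 + h2).
  move=> [p1 o1] [p2 o2]; split; last exact: order_continuous_add.
  by have := lle_add HF p1 p2; rewrite addr0.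
have main adm : (forall h, adm h -> lle F 0 h) -> adm 0 ->
    (forall h1 h2, adm h1 -> adm h2 -> adm (h1 + h2)) ->
    gap_open (dispersed F adm) /\ forall E, closed_subspace E ->
    (dispersed F adm E <-> coincide_on (lin_open F adm) E) /\
    (dispersed F adm E <-> complementary F adm E).
  move=> adm_ge0 adm0 adm_add; split; first exact: gap_open_dispersed.
  move=> E cE; split; split.
  - exact: dispersed_coincide.
  - exact: coincide_dispersed.
  - exact: dispersed_complementary.
  - exact: complementary_dispersed.
have [gap_un coinc_un] := main _ un_ge0 un0 un_add.
have [gap_una coinc_una] := main _ una_ge0 una0 una_add.
by [].
Qed.
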